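(* Suppose (A.1) and (A.2) hold, $k_n\to\infty$, $\log(k_n)/\log(n)\to0$ and $k_n^{1/2}b(\log(n/k_n))\to\lambda\in\mathbb{R}$. (i) Suppose $b$ is ultimately non-positive and let $\alpha=-4\lim_{n\to\infty}b(\log n)\,k_n/\log k_n\in[0,+\infty]$ (assumed to exist). If $\alpha>\theta$, then for $n$ large enough $AMSE(\hat\theta_n^{(2)})<AMSE(\hat\theta_n^{(1)})<AMSE(\hat\theta_n^{(3)})$. If $\alpha<\theta$, then for $n$ large enough $AMSE(\hat\theta_n^{(1)})<\min(AMSE(\hat\theta_n^{(2)}),AMSE(\hat\theta_n^{(3)}))$. (ii) Suppose $b$ is ultimately non-negative and let $\beta=2\lim_{x\to\infty}x\,b(x)\in[0,+\infty]$ (assumed to exist). If $\beta>\theta$, then for $n$ large enough $AMSE(\hat\theta_n^{(3)})<AMSE(\hat\theta_n^{(1)})<AMSE(\hat\theta_n^{(2)})$. If $\beta<\theta$, then for $n$ large enough $AMSE(\hat\theta_n^{(1)})<\min(AMSE(\hat\theta_n^{(2)}),AMSE(\hat\theta_n^{(3)}))$.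
   Context: Let $X_1,\dots,X_n$ be i.i.d. with cdf $F$, order statistics $X_{1,n}\le\dots\le X_{n,n}$, and $1\le k_n<n$. Assumption (A.1): there is $\theta>0$ such that $1-F(x)=\exp(-H(x))$ for $x\ge x_0\ge0$, and $H^{\leftarrow}(t)=\inf\{x:H(x)\ge t\}=t^\theta\ell(t)$ with $\ell$ slowly varying at infinity. Assumption (A.2): there exist $\rho\le0$ and $b$ with $b(x)\to0$ such that, uniformly locally on $\lambda\ge1$, $\log(\ell(\lambda x)/\ell(x))\sim b(x)K_\rho(\lambda)$ as $x\to\infty$, where $K_\rho(\lambda)=\int_1^\lambda u^{\rho-1}du$ (so $|b|$ is regularly varying with index $\rho$). Let $\mu_0(t)=\int_0^\infty\log(1+x/t)e^{-x}dx$, $T_n^{(1)}=\mu_0(\log(n/k_n))$, $T_n^{(2)}=\frac1{k_n}\sum_{i=1}^{k_n}\log\left(1-\frac{\log(i/k_n)}{\log(n/k_n)}\right)$, $T_n^{(3)}=1/\log(n/k_n)$, $\hat\theta_n^{(i)}=\frac{1}{T_n^{(i)}}\frac1{k_n}\sum_{j=1}^{k_n}(\log X_{n-j+1,n}-\log X_{n-k_n+1,n})$, and $a_n^{(i)}=\mu_0(\log(n/k_n))/T_n^{(i)}-1$. The asymptotic mean square error is defined by $AMSE(\hat\theta_n^{(i)})=(\theta a_n^{(i)}+b(\log(n/k_n)))^2+\theta^2/k_n$. *)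

From Stdlib Require Import Reals Lra.
Open Scope R_scope.

Definition eventually_R (P : R -> Prop) : Prop :=
  exists X : R, forall x : R, X <= x -> P x.

Definition eventually_N (P : nat -> Prop) : Prop :=
  exists N : nat, forall n : nat, (N <= n)%nat -> P n.

Definition lim_infty (f : R -> R) (l : R) : Prop :=
  forall eps : R, 0 < eps -> eventually_R (fun x => Rabs (f x - l) < eps).

Definition is_glb (E : R -> Prop) (m : R) : Prop :=
  (forall x, E x -> m <= x) /\ (forall m', (forall x, E x -> m' <= x) -> m' <= m).

Definition is_cdf (F : R -> R) : Prop :=
  (forall x y, x <= y -> F x <= F y) /\
  (forall x eps, 0 < eps -> exists d, 0 < d /\ forall y, x <= y < x + d -> Rabs (F y - F x) < eps) /\
  (forall eps, 0 < eps -> exists X, forall x, x <= X -> Rabs (F x) < eps) /\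
  lim_infty F 1.

Definition slowly_varying (ell : R -> R) : Prop :=
  eventually_R (fun x => 0 < ell x) /\
  forall lam : R, 0 < lam -> lim_infty (fun x => ell (lam * x) / ell x) 1.

(* K_rho(lam) = int_1^lam u^(rho-1) du, written in closed form *)
Definition K (rho lam : R) : R :=
  if Req_EM_T rho 0 then ln lam else (Rpower lam rho - 1) / rho.

(* Assumption (A.2): log(ell(lam x)/ell(x)) ~ b(x) K_rho(lam), uniformly locally
   on lam >= 1, read as: log(ell(lam x)/ell(x)) / b(x) -> K_rho(lam) uniformly
   for lam in every compact [1, Lam]. *)
Definition second_order (ell b : R -> R) (rho : R) : Prop :=
  forall Lam eps : R, 1 <= Lam -> 0 < eps ->
    eventually_R (fun x => forall lam, 1 <= lam <= Lam ->
      Rabs (ln (ell (lam * x) / ell x) / b x - K rho lam) < eps).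

Definition improper_int0 (f : R -> R) (l : R) : Prop :=
  forall eps : R, 0 < eps ->
    eventually_R (fun A => exists pr : Riemann_integrable f 0 A, Rabs (RiemannInt pr - l) < eps).

Inductive ext : Type := Fin (r : R) | PInf.

Definition ext_lt_R (a : ext) (t : R) : Prop :=
  match a with Fin r => r < t | PInf => False end.
Definition R_lt_ext (t : R) (a : ext) : Prop :=
  match a with Fin r => t < r | PInf => True end.

Definition seq_lim_ext (u : nat -> R) (a : ext) : Prop :=
  match a with
  | Fin l => Un_cv u l
  | PInf => forall M : R, eventually_N (fun n => M <= u n)
  end.

Definition fun_lim_ext (f : R -> R) (a : ext) : Prop :=
  match a with
  | Fin l => lim_infty f l
  | PInf => forall M : R, eventually_R (fun x => M <= f x)
  end.

Definition Ln (k : nat -> nat) (n : nat) : R := ln (INR n / INR (k n)).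

Definition T1 (mu0 : R -> R) (k : nat -> nat) (n : nat) : R := mu0 (Ln k n).

Definition T2 (k : nat -> nat) (n : nat) : R :=
  / INR (k n) *
  sum_f_R0 (fun j => ln (1 - ln (INR (S j) / INR (k n)) / Ln k n)) (pred (k n)).

Definition T3 (k : nat -> nat) (n : nat) : R := / Ln k n.

(* a_n^{(i)} = mu0(log(n/k_n)) / T_n^{(i)} - 1, given the value T of T_n^{(i)} *)
Definition a_n (mu0 : R -> R) (k : nat -> nat) (n : nat) (T : R) : R :=
  mu0 (Ln k n) / T - 1.

Definition AMSE (mu0 b : R -> R) (theta : R) (k : nat -> nat) (n : nat) (T : R) : R :=
  (theta * a_n mu0 k n T + b (Ln k n)) ^ 2 + theta ^ 2 / INR (k n).

Definition AMSE1 mu0 b theta k n := AMSE mu0 b theta k n (T1 mu0 k n).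
Definition AMSE2 mu0 b theta k n := AMSE mu0 b theta k n (T2 k n).
Definition AMSE3 mu0 b theta k n := AMSE mu0 b theta k n (T3 k n).

From Stdlib Require Import Reals Lra Lia Psatz.
Open Scope R_scope.

(* The AMSEs differ only through the biases a_n^(i).  Sandwiching ln (1 + x/t) between its
   Taylor polynomials gives 1/t - 1/t^2 <= mu0 t <= 1/t - 1/t^2 + 2/t^3, hence a_n^(1) = 0
   and a_n^(3) ~ -1/log(n/k_n).  Comparing the Riemann sum T_n^(2) with the integral mu0 cell by
   cell, with Stirling's formula for the sum of the nodes, gives a_n^(2) ~ log k_n / (2 k_n).
   Since AMSE^(i) - AMSE^(1) = theta a_n^(i) (theta a_n^(i) + 2 b(log(n/k_n))), the order is
   decided by the sign of theta a_n^(i) + 2 b(log(n/k_n)): for i = 2 by comparing theta with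
   -4 b(log(n/k_n)) k_n / log k_n, which has the limit alpha because (A.2) forces
   b(log n) ~ b(log(n/k_n)); for i = 3 by comparing theta with 2 x b(x) at x = log(n/k_n). *)

Lemma ln_le x y : 0 < x -> x <= y -> ln x <= ln y.
Proof.
  intros Hx [Hxy | <-]; [now left; apply ln_increasing | lra].
Qed.

Lemma ln_div x y : 0 < x -> 0 < y -> ln (x / y) = ln x - ln y.
Proof.
  intros Hx Hy. unfold Rdiv.
  rewrite ln_mult, ln_Rinv; [ring | assumption | assumption | now apply Rinv_0_lt_compat].
Qed.

Lemma ln_le_sub_1 y : 0 < y -> ln y <= y - 1.
Proof.
  intros Hy. pose proof (exp_ineq1_le (ln y)) as H. rewrite exp_ln in H; lra.
Qed.

Lemma one_sub_inv_le_ln y : 0 < y -> 1 - / y <= ln y.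
Proof.
  intros Hy. pose proof (ln_le_sub_1 (/ y) (Rinv_0_lt_compat _ Hy)) as H.
  rewrite ln_Rinv in H; lra.
Qed.

Lemma mul_exp_opp_le c eps A : 0 <= c -> 0 < eps -> c / eps <= A -> c * exp (- A) <= eps.
Proof.
  intros Hc Heps HA.
  assert (HcA : c <= A * eps).
  { apply (Rmult_le_compat_r eps) in HA; [| lra].
    unfold Rdiv in HA. rewrite Rmult_assoc, Rinv_l, Rmult_1_r in HA; lra. }
  pose proof (exp_ineq1_le A). pose proof (exp_pos A).
  rewrite exp_Ropp. apply (Rmult_le_reg_r (exp A)); [assumption |].
  rewrite Rmult_assoc, Rinv_l by lra. nra.
Qed.

Lemma Rabs_le_between x a : Rabs x <= a -> - a <= x <= a.
Proof.
  intros H. pose proof (Rle_abs x). pose proof (Rle_abs (- x)). rewrite Rabs_Ropp in *. lra.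
Qed.

Lemma Rdiv_le_0_compat a b : 0 <= a -> 0 < b -> 0 <= a / b.
Proof. intros. now apply Rle_mult_inv_pos. Qed.

Lemma derivable_pt_lim_ext_val f x l l' :
  derivable_pt_lim f x l -> l = l' -> derivable_pt_lim f x l'.
Proof. now intros ? <-. Qed.

Lemma derivable_pt_lim_exp_opp x : derivable_pt_lim (fun y => exp (- y)) x (- exp (- x)).
Proof.
  replace (- exp (- x)) with (exp (- x) * (-1)) by ring.
  apply (derivable_pt_lim_comp (fun y => - y) exp).
  - apply (derivable_pt_lim_opp (fun y => y) x 1), derivable_pt_lim_id.
  - apply derivable_pt_lim_exp.
Qed.

Lemma derivable_pt_lim_ln_1_plus c : -1 < c ->
  derivable_pt_lim (fun y => ln (1 + y)) c (/ (1 + c)).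
Proof.
  intros Hc. replace (/ (1 + c)) with (/ (1 + c) * (0 + 1)) by ring.
  apply (derivable_pt_lim_comp (fun y => 1 + y) ln).
  - apply (derivable_pt_lim_plus (fun _ => 1) (fun y => y)).
    + apply derivable_pt_lim_const.
    + apply derivable_pt_lim_id.
  - apply derivable_pt_lim_ln. lra.
Qed.

Ltac derive_poly_exp :=
  first
  [ apply derivable_pt_lim_const
  | apply derivable_pt_lim_id
  | apply derivable_pt_lim_exp_opp
  | eapply derivable_pt_lim_plus; derive_poly_exp
  | eapply derivable_pt_lim_minus; derive_poly_exp
  | eapply derivable_pt_lim_mult; derive_poly_exp
  | eapply derivable_pt_lim_opp; derive_poly_exp ].

Lemma le_of_derivative_nonneg f f' a b : a <= b ->
  (forall c, a <= c <= b -> derivable_pt_lim f c (f' c)) ->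
  (forall c, a < c < b -> 0 <= f' c) -> f a <= f b.
Proof.
  intros [Hab | <-] Hd Hpos; [| lra].
  destruct (MVT_cor2 f f' a b Hab Hd) as [c [Hc Hcab]].
  specialize (Hpos c Hcab). nra.
Qed.

Lemma ln_1_plus_ge y : 0 <= y -> y - y * y / 2 <= ln (1 + y).
Proof.
  intros Hy.
  assert (H : ln (1 + 0) - (0 - 0 * 0 / 2) <= ln (1 + y) - (y - y * y / 2)).
  { apply (le_of_derivative_nonneg (fun y => ln (1 + y) - (y - y * y / 2))
             (fun c => / (1 + c) - (1 - c)) 0 y Hy).
    - intros c Hc. apply derivable_pt_lim_minus.
      + apply derivable_pt_lim_ln_1_plus. lra.
      + eapply derivable_pt_lim_ext_val; [unfold Rdiv; derive_poly_exp | cbv beta; field].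
    - intros c Hc. replace (/ (1 + c) - (1 - c)) with (c * c / (1 + c)) by (field; lra).
      apply Rdiv_le_0_compat; nra. }
  rewrite Rplus_0_r, ln_1 in H. lra.
Qed.

Lemma ln_1_plus_le y : 0 <= y -> ln (1 + y) <= y - y * y / 2 + y * y * y / 3.
Proof.
  intros Hy.
  assert (H : (0 - 0 * 0 / 2 + 0 * 0 * 0 / 3) - ln (1 + 0)
              <= (y - y * y / 2 + y * y * y / 3) - ln (1 + y)).
  { apply (le_of_derivative_nonneg (fun y => (y - y * y / 2 + y * y * y / 3) - ln (1 + y))
             (fun c => (1 - c + c * c) - / (1 + c)) 0 y Hy).
    - intros c Hc. apply derivable_pt_lim_minus.
      + eapply derivable_pt_lim_ext_val; [unfold Rdiv; derive_poly_exp | cbv beta; field].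
      + apply derivable_pt_lim_ln_1_plus. lra.
    - intros c Hc.
      replace ((1 - c + c * c) - / (1 + c)) with (c * c * c / (1 + c)) by (field; lra).
      apply Rdiv_le_0_compat; nra. }
  rewrite Rplus_0_r, ln_1 in H. lra.
Qed.

Lemma ln_1_plus_div_le_tangent t a x : 0 < t -> 0 <= a <= x ->
  ln (1 + x / t) <= ln (1 + a / t) + (x - a) / t.
Proof.
  intros Ht Ha.
  assert (0 <= a / t) by (apply Rdiv_le_0_compat; lra).
  assert (0 <= x / t) by (apply Rdiv_le_0_compat; lra).
  pose proof (ln_le_sub_1 ((1 + x / t) / (1 + a / t))) as Hq.
  rewrite ln_div in Hq by lra.
  replace ((1 + x / t) / (1 + a / t) - 1) with ((x - a) / (t + a)) in Hq by (field; lra).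
  assert ((x - a) / (t + a) <= (x - a) / t).
  { apply Rmult_le_compat_l; [lra | apply Rinv_le_contravar; lra]. }
  assert (0 < (1 + x / t) / (1 + a / t)) by (apply Rdiv_lt_0_compat; lra).
  lra.
Qed.

Lemma ln_1_plus_div_ge_chord t a x B : 0 < t -> 0 <= a <= x -> x <= B ->
  ln (1 + a / t) + (x - a) / (t + B) <= ln (1 + x / t).
Proof.
  intros Ht Ha HB.
  assert (0 <= a / t) by (apply Rdiv_le_0_compat; lra).
  assert (0 <= x / t) by (apply Rdiv_le_0_compat; lra).
  pose proof (one_sub_inv_le_ln ((1 + x / t) / (1 + a / t))) as Hq.
  rewrite ln_div in Hq by lra.
  replace (1 - / ((1 + x / t) / (1 + a / t))) with ((x - a) / (t + x)) in Hq by (field; lra).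
  assert ((x - a) / (t + B) <= (x - a) / (t + x)).
  { apply Rmult_le_compat_l; [lra | apply Rinv_le_contravar; lra]. }
  assert (0 < (1 + x / t) / (1 + a / t)) by (apply Rdiv_lt_0_compat; lra).
  lra.
Qed.

Lemma RiemannInt_eq_antiderivative h G a b (pr : Riemann_integrable h a b) : a <= b ->
  (forall x, a <= x <= b -> derivable_pt_lim G x (h x)) ->
  (forall x, a <= x <= b -> continuity_pt h x) -> RiemannInt pr = G b - G a.
Proof.
  intros Hab Hd Hc.
  rewrite (RiemannInt_P20 Hab (FTC_P1 Hab Hc) pr).
  assert (HG : antiderivative h G a b).
  { split; [| assumption]. intros x Hx. exists (exist _ (h x) (Hd x Hx)). reflexivity. }
  destruct (antiderivative_Ucte _ _ _ _ _ (RiemannInt_P29 Hab Hc) HG) as [C HC].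
  rewrite (HC b), (HC a); [ring | lra | lra].
Qed.

Lemma RiemannInt_le_antiderivative f h G a b (pr : Riemann_integrable f a b) : a <= b ->
  (forall x, a <= x <= b -> derivable_pt_lim G x (h x)) ->
  (forall x, a <= x <= b -> continuity_pt h x) ->
  (forall x, a < x < b -> f x <= h x) -> RiemannInt pr <= G b - G a.
Proof.
  intros Hab Hd Hc Hle.
  rewrite <- (RiemannInt_eq_antiderivative h G a b (continuity_implies_RiemannInt Hab Hc))
    by assumption.
  now apply RiemannInt_P19.
Qed.

Lemma RiemannInt_ge_antiderivative f h G a b (pr : Riemann_integrable f a b) : a <= b ->
  (forall x, a <= x <= b -> derivable_pt_lim G x (h x)) ->
  (forall x, a <= x <= b -> continuity_pt h x) ->
  (forall x, a < x < b -> h x <= f x) -> G b - G a <= RiemannInt pr.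
Proof.
  intros Hab Hd Hc Hle.
  rewrite <- (RiemannInt_eq_antiderivative h G a b (continuity_implies_RiemannInt Hab Hc))
    by assumption.
  now apply RiemannInt_P19.
Qed.

Lemma RiemannInt_le_affine_exp f a b v c (pr : Riemann_integrable f a b) : a <= b ->
  (forall x, a < x < b -> f x <= (v + c * (x - a)) * exp (- x)) ->
  RiemannInt pr <= v * (exp (- a) - exp (- b)) + c * (exp (- a) - exp (- b) - (b - a) * exp (- b)).
Proof.
  intros Hab Hf. eapply Rle_trans.
  - apply (RiemannInt_le_antiderivative f (fun x => (v + c * (x - a)) * exp (- x))
             (fun x => - ((v + c * (x - a) + c) * exp (- x))) a b pr Hab); [| intros; reg | auto].
    intros x _. eapply derivable_pt_lim_ext_val; [derive_poly_exp | cbv beta; ring].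
  - right. ring.
Qed.

Lemma RiemannInt_ge_affine_exp f a b v c (pr : Riemann_integrable f a b) : a <= b ->
  (forall x, a < x < b -> (v + c * (x - a)) * exp (- x) <= f x) ->
  v * (exp (- a) - exp (- b)) + c * (exp (- a) - exp (- b) - (b - a) * exp (- b)) <= RiemannInt pr.
Proof.
  intros Hab Hf. eapply Rle_trans; cycle 1.
  - apply (RiemannInt_ge_antiderivative f (fun x => (v + c * (x - a)) * exp (- x))
             (fun x => - ((v + c * (x - a) + c) * exp (- x))) a b pr Hab); [| intros; reg | auto].
    intros x _. eapply derivable_pt_lim_ext_val; [derive_poly_exp | cbv beta; ring].
  - right. ring.
Qed.

Lemma improper_int0_le f l c : improper_int0 f l ->
  (forall eps, 0 < eps ->
     eventually_R (fun A => forall pr : Riemann_integrable f 0 A, RiemannInt pr <= c + eps)) ->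
  l <= c.
Proof.
  intros Hl Hc. apply Rle_plus_epsilon. intros eps Heps.
  destruct (Hl (eps / 2)) as [X1 H1]; [lra |].
  destruct (Hc (eps / 2)) as [X2 H2]; [lra |].
  destruct (H1 (Rmax X1 X2) (Rmax_l _ _)) as [pr Hpr].
  specialize (H2 _ (Rmax_r _ _) pr). apply Rabs_def2 in Hpr. lra.
Qed.

Lemma improper_int0_ge f l c : improper_int0 f l ->
  (forall eps, 0 < eps ->
     eventually_R (fun A => forall pr : Riemann_integrable f 0 A, c - eps <= RiemannInt pr)) ->
  c <= l.
Proof.
  intros Hl Hc. apply Rle_plus_epsilon. intros eps Heps.
  destruct (Hl (eps / 2)) as [X1 H1]; [lra |].
  destruct (Hc (eps / 2)) as [X2 H2]; [lra |].
  destruct (H1 (Rmax X1 X2) (Rmax_l _ _)) as [pr Hpr].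
  specialize (H2 _ (Rmax_r _ _) pr). apply Rabs_def2 in Hpr. lra.
Qed.

Lemma eventually_N_and (P Q : nat -> Prop) :
  eventually_N P -> eventually_N Q -> eventually_N (fun n => P n /\ Q n).
Proof.
  intros [N1 H1] [N2 H2]. exists (max N1 N2). intros n Hn. split; [apply H1 | apply H2]; lia.
Qed.

Lemma eventually_N_mono (P Q : nat -> Prop) :
  (forall n, P n -> Q n) -> eventually_N P -> eventually_N Q.
Proof. intros H [N HN]. exists N. auto. Qed.

Lemma eventually_N_ge (N : nat) : eventually_N (fun n => (N <= n)%nat).
Proof. now exists N. Qed.

Lemma Un_cv_eventually (u : nat -> R) l eps :
  Un_cv u l -> 0 < eps -> eventually_N (fun n => Rabs (u n - l) < eps).
Proof.
  intros H Heps. destruct (H eps Heps) as [N HN]. exists N. intros n Hn. apply HN. lia.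
Qed.

Lemma eventually_Un_cv (u : nat -> R) l :
  (forall eps, 0 < eps -> eventually_N (fun n => Rabs (u n - l) < eps)) -> Un_cv u l.
Proof.
  intros H eps Heps. destruct (H eps Heps) as [N HN]. exists N. intros n Hn. apply HN. lia.
Qed.

Lemma Un_cv_eventually_ext (u v : nat -> R) l :
  Un_cv u l -> eventually_N (fun n => u n = v n) -> Un_cv v l.
Proof.
  intros Hu Heq. apply eventually_Un_cv. intros eps Heps.
  apply (eventually_N_mono (fun n => Rabs (u n - l) < eps /\ u n = v n)).
  - intros n [H <-]. exact H.
  - apply eventually_N_and; [apply Un_cv_eventually |]; assumption.
Qed.

Lemma Un_cv_eq (u : nat -> R) l l' : Un_cv u l -> l = l' -> Un_cv u l'.
Proof. now intros ? <-. Qed.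

Lemma Un_cv_const c : Un_cv (fun _ => c) c.
Proof. intros eps Heps. exists 0%nat. intros. unfold Rdist. rewrite Rminus_diag, Rabs_R0. lra. Qed.

Lemma Un_cv_squeeze (lo u hi : nat -> R) l :
  eventually_N (fun n => lo n <= u n <= hi n) -> Un_cv lo l -> Un_cv hi l -> Un_cv u l.
Proof.
  intros Hb Hlo Hhi. apply eventually_Un_cv. intros eps Heps.
  apply (eventually_N_mono
           (fun n => (lo n <= u n <= hi n) /\ Rabs (lo n - l) < eps /\ Rabs (hi n - l) < eps)).
  - intros n [H1 [H2 H3]]. apply Rabs_def2 in H2, H3. apply Rabs_def1; lra.
  - apply eventually_N_and; [assumption |].
    apply eventually_N_and; apply Un_cv_eventually; assumption.
Qed.

Lemma Un_cv_eventually_gt (u : nat -> R) l c :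
  Un_cv u l -> c < l -> eventually_N (fun n => c < u n).
Proof.
  intros H Hc. apply (eventually_N_mono (fun n => Rabs (u n - l) < l - c)).
  - intros n Hn. apply Rabs_def2 in Hn. lra.
  - apply Un_cv_eventually; [assumption | lra].
Qed.

Lemma Un_cv_eventually_lt (u : nat -> R) l c :
  Un_cv u l -> l < c -> eventually_N (fun n => u n < c).
Proof.
  intros H Hc. apply (eventually_N_mono (fun n => Rabs (u n - l) < c - l)).
  - intros n Hn. apply Rabs_def2 in Hn. lra.
  - apply Un_cv_eventually; [assumption | lra].
Qed.

Lemma Un_cv_inv (u : nat -> R) l : Un_cv u l -> l <> 0 -> Un_cv (fun n => / u n) (/ l).
Proof.
  intros H Hl. apply eventually_Un_cv. intros eps Heps.
  assert (Hal : 0 < Rabs l) by (apply Rabs_pos_lt; assumption).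
  set (e := Rmin (Rabs l / 2) (eps * (Rabs l * Rabs l) / 2)).
  assert (He : 0 < e).
  { unfold e. apply Rmin_glb_lt; [lra |].
    apply Rdiv_lt_0_compat; [apply Rmult_lt_0_compat; [| apply Rmult_lt_0_compat] |]; lra. }
  apply (eventually_N_mono (fun n => Rabs (u n - l) < e)); [| apply Un_cv_eventually; assumption].
  intros n Hn.
  assert (He1 : e <= Rabs l / 2) by apply Rmin_l.
  assert (He2 : e <= eps * (Rabs l * Rabs l) / 2) by apply Rmin_r.
  assert (Hun : Rabs l / 2 <= Rabs (u n)).
  { pose proof (Rabs_triang_inv l (l - u n)) as Ht.
    replace (l - (l - u n)) with (u n) in Ht by ring.
    rewrite Rabs_minus_sym in Ht. lra. }
  assert (Hu0 : u n <> 0) by (intros Z; rewrite Z, Rabs_R0 in Hun; lra).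
  replace (/ u n - / l) with (- (u n - l) / (u n * l)) by (field; auto).
  unfold Rdiv. rewrite Rabs_mult, Rabs_inv, Rabs_mult, Rabs_Ropp.
  assert (0 < Rabs (u n) * Rabs l) by nra.
  apply (Rmult_lt_reg_r (Rabs (u n) * Rabs l)); [assumption |].
  rewrite Rmult_assoc, Rinv_l by lra. nra.
Qed.

Lemma cv_infty_of_le (u : nat -> R) :
  (forall M, eventually_N (fun n => M <= u n)) -> cv_infty u.
Proof.
  intros H M. destruct (H (M + 1)) as [N HN]. exists N. intros n Hn. specialize (HN n Hn). lra.
Qed.

Lemma cv_infty_eventually (u : nat -> R) M : cv_infty u -> eventually_N (fun n => M <= u n).
Proof. intros H. destruct (H M) as [N HN]. exists N. intros n Hn. left. auto. Qed.

Lemma eventually_R_cv_infty (P : R -> Prop) (x : nat -> R) :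
  eventually_R P -> cv_infty x -> eventually_N (fun n => P (x n)).
Proof.
  intros [X HX] Hx. apply (eventually_N_mono (fun n => X <= x n)); [auto |].
  now apply cv_infty_eventually.
Qed.

Lemma lim_infty_cv_infty f l (x : nat -> R) :
  lim_infty f l -> cv_infty x -> Un_cv (fun n => f (x n)) l.
Proof.
  intros Hf Hx. apply eventually_Un_cv. intros eps Heps.
  now apply (eventually_R_cv_infty (fun y => Rabs (f y - l) < eps)); [apply Hf |].
Qed.

Lemma Un_cv_ln_div_cv_infty (u : nat -> R) : cv_infty u -> Un_cv (fun n => ln (u n) / u n) 0.
Proof.
  intros Hu.
  apply (Un_cv_squeeze (fun _ => 0) _ (fun n => 2 * / sqrt (u n))).
  - apply (eventually_N_mono (fun n => 1 <= u n)); [| now apply cv_infty_eventually].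
    intros n H. set (x := u n) in *.
    assert (Hs : 0 < sqrt x) by (apply sqrt_lt_R0; lra).
    assert (Hss : sqrt x * sqrt x = x) by (apply sqrt_sqrt; lra).
    assert (Hl : ln x = 2 * ln (sqrt x)) by (rewrite <- Hss at 1; rewrite ln_mult; lra).
    pose proof (ln_le_sub_1 (sqrt x) Hs).
    assert (0 <= ln x) by (rewrite <- ln_1; apply ln_le; lra).
    split; [apply Rdiv_le_0_compat; lra |].
    apply (Rmult_le_reg_r x); [lra |]. unfold Rdiv. rewrite Rmult_assoc, Rinv_l by lra.
    replace (2 * / sqrt x * x) with (2 * / sqrt x * (sqrt x * sqrt x)) by now rewrite Hss.
    replace (2 * / sqrt x * (sqrt x * sqrt x)) with (2 * sqrt x) by (field; lra).
    nra.
  - apply Un_cv_const.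
  - apply (Un_cv_eq _ (2 * 0)); [| ring].
    apply CV_mult; [apply Un_cv_const | apply cv_infty_cv_0].
    intros M. destruct (Hu (Rmax 0 M * Rmax 0 M)) as [N HN]. exists N. intros n Hn.
    specialize (HN n Hn).
    assert (Rmax 0 M = sqrt (Rmax 0 M * Rmax 0 M))
      by (rewrite sqrt_square; [| apply Rmax_l]; reflexivity).
    pose proof (Rmax_r 0 M).
    apply Rle_lt_trans with (Rmax 0 M); [assumption |].
    rewrite H. apply sqrt_lt_1_alt. split; [apply Rle_0_sqr | assumption].
Qed.

Lemma fun_lim_ext_cv_infty f a (x : nat -> R) :
  fun_lim_ext f a -> cv_infty x -> seq_lim_ext (fun n => f (x n)) a.
Proof.
  destruct a as [l |]; simpl; intros Hf Hx.
  - now apply lim_infty_cv_infty.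
  - intros M. now apply (eventually_R_cv_infty (fun y => M <= f y)).
Qed.

Lemma seq_lim_ext_eventually_ext (u v : nat -> R) a :
  seq_lim_ext u a -> eventually_N (fun n => u n = v n) -> seq_lim_ext v a.
Proof.
  destruct a as [l |]; simpl; intros Hu Heq.
  - now apply (Un_cv_eventually_ext u).
  - intros M. apply (eventually_N_mono (fun n => M <= u n /\ u n = v n)).
    + intros n [H <-]. exact H.
    + now apply eventually_N_and.
Qed.

Lemma seq_lim_ext_div_cv_1 (v w : nat -> R) a :
  seq_lim_ext v a -> Un_cv w 1 -> seq_lim_ext (fun n => v n / w n) a.
Proof.
  destruct a as [l |]; simpl; intros Hv Hw.
  - apply (Un_cv_eq _ (l * / 1)); [| field].
    apply CV_mult; [assumption | apply Un_cv_inv; [assumption | lra]].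
  - intros M.
    apply (eventually_N_mono
             (fun n => 2 * Rmax 0 M <= v n /\ Rabs (w n - 1) < / 2)).
    + intros n [H1 H2]. apply Rabs_def2 in H2.
      pose proof (Rmax_l 0 M). pose proof (Rmax_r 0 M).
      apply Rle_trans with (Rmax 0 M); [assumption |].
      apply (Rmult_le_reg_r (w n)); [lra |]. unfold Rdiv.
      rewrite Rmult_assoc, Rinv_l by lra. nra.
    + apply eventually_N_and; [apply Hv | apply Un_cv_eventually; [assumption | lra]].
Qed.

Lemma Un_cv_lt_seq_lim_ext (u v : nat -> R) c a :
  Un_cv u c -> seq_lim_ext v a -> R_lt_ext c a -> eventually_N (fun n => u n < v n).
Proof.
  destruct a as [r |]; simpl; intros Hu Hv Hc.
  - apply (eventually_N_mono (fun n => u n < (c + r) / 2 /\ (c + r) / 2 < v n)).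
    + intros n [H1 H2]. lra.
    + apply eventually_N_and;
        [apply (Un_cv_eventually_lt _ c) | apply (Un_cv_eventually_gt _ r)]; (assumption || lra).
  - apply (eventually_N_mono (fun n => u n < c + 1 /\ c + 1 <= v n)).
    + intros n [H1 H2]. lra.
    + apply eventually_N_and; [apply (Un_cv_eventually_lt _ c); [assumption | lra] | apply Hv].
Qed.

Lemma seq_lim_ext_lt_Un_cv (u v : nat -> R) c a :
  Un_cv u c -> seq_lim_ext v a -> ext_lt_R a c -> eventually_N (fun n => v n < u n).
Proof.
  destruct a as [r |]; simpl; intros Hu Hv Hc; [| contradiction].
  apply (eventually_N_mono (fun n => v n < (c + r) / 2 /\ (c + r) / 2 < u n)).
  - intros n [H1 H2]. lra.
  - apply eventually_N_and;
      [apply (Un_cv_eventually_lt _ r) | apply (Un_cv_eventually_gt _ c)]; (assumption || lra).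
Qed.

(** * Bounds on mu0 *)

Definition log_kernel (t x : R) : R := ln (1 + x / t) * exp (- x).

Lemma improper_int0_log_kernel_le t m : 1 <= t -> improper_int0 (log_kernel t) m ->
  m <= 1 / t - 1 / (t * t) + 2 / (t * t * t).
Proof.
  intros Ht Hm. apply (improper_int0_le _ _ _ Hm). intros eps Heps. exists 0. intros A HA pr.
  set (P := fun x => x / t - x * x / (2 * t * t) + x * x * x / (3 * t * t * t)
                     + (1 / t - x / (t * t) + x * x / (t * t * t))
                     + (-1 / (t * t) + 2 * x / (t * t * t)) + 2 / (t * t * t)).
  eapply Rle_trans.
  - apply (RiemannInt_le_antiderivative _
             (fun x => (x / t - x * x / (2 * t * t) + x * x * x / (3 * t * t * t)) * exp (- x))
             (fun x => - (P x * exp (- x))) 0 A pr HA).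
    + intros x _. eapply derivable_pt_lim_ext_val;
        [unfold P, Rdiv; derive_poly_exp | cbv beta; field; lra].
    + intros x _. reg.
    + intros x Hx. unfold log_kernel. apply Rmult_le_compat_r; [left; apply exp_pos |].
      assert (0 <= x / t) by (apply Rdiv_le_0_compat; lra).
      eapply Rle_trans; [apply ln_1_plus_le; assumption | right; field; lra].
  - assert (HPA : 0 <= P A).
    { unfold P.
      replace (A / t - A * A / (2 * t * t) + A * A * A / (3 * t * t * t)
               + (1 / t - A / (t * t) + A * A / (t * t * t))
               + (-1 / (t * t) + 2 * A / (t * t * t)) + 2 / (t * t * t))
        with ((A * (t * t / 2 - A * t / 2 + A * A / 3) + A * (t * t / 2 - t + 2)
               + (t * t - t + 2) + A * A) / (t * t * t)) by (field; lra).
      assert (0 <= t * t / 2 - A * t / 2 + A * A / 3) by nra.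
      assert (0 <= t * t / 2 - t + 2) by nra.
      apply Rdiv_le_0_compat; [nra | apply Rmult_lt_0_compat; nra]. }
    assert (P 0 = 1 / t - 1 / (t * t) + 2 / (t * t * t)) by (unfold P; field; lra).
    rewrite Ropp_0, exp_0. pose proof (exp_pos (- A)). nra.
Qed.

Lemma improper_int0_log_kernel_ge t m : 1 <= t -> improper_int0 (log_kernel t) m ->
  1 / t - 1 / (t * t) <= m.
Proof.
  intros Ht Hm. apply (improper_int0_ge _ _ _ Hm). intros eps Heps.
  exists (2 * t + 2). intros A HA pr.
  set (P := fun x => x / t - x * x / (2 * t * t) + (1 / t - x / (t * t)) - 1 / (t * t)).
  eapply Rle_trans; cycle 1.
  - apply (RiemannInt_ge_antiderivative _ (fun x => (x / t - x * x / (2 * t * t)) * exp (- x))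
             (fun x => - (P x * exp (- x))) 0 A pr); [lra | | |].
    + intros x _. eapply derivable_pt_lim_ext_val;
        [unfold P, Rdiv; derive_poly_exp | cbv beta; field; lra].
    + intros x _. reg.
    + intros x Hx. unfold log_kernel. apply Rmult_le_compat_r; [left; apply exp_pos |].
      assert (0 <= x / t) by (apply Rdiv_le_0_compat; lra).
      eapply Rle_trans; [| apply ln_1_plus_ge; assumption]. right. field. lra.
  - assert (HPA : P A <= 0).
    { unfold P.
      replace (A / t - A * A / (2 * t * t) + (1 / t - A / (t * t)) - 1 / (t * t))
        with ((A * (t - A / 2) + t - A - 1) / (t * t)) by (field; lra).
      assert (A * (t - A / 2) <= - A) by nra.
      assert (0 < / (t * t)) by (apply Rinv_0_lt_compat; nra).
      unfold Rdiv. nra. }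
    assert (P 0 = 1 / t - 1 / (t * t)) by (unfold P; field; lra).
    rewrite Ropp_0, exp_0. pose proof (exp_pos (- A)). nra.
Qed.

Lemma RiemannInt_log_kernel_le_tangent t a b (pr : Riemann_integrable (log_kernel t) a b) :
  0 < t -> 0 <= a <= b ->
  RiemannInt pr <= ln (1 + a / t) * (exp (- a) - exp (- b))
                   + / t * (exp (- a) - exp (- b) - (b - a) * exp (- b)).
Proof.
  intros Ht Hab. apply RiemannInt_le_affine_exp; [lra |].
  intros x Hx. unfold log_kernel. apply Rmult_le_compat_r; [left; apply exp_pos |].
  replace (ln (1 + a / t) + / t * (x - a)) with (ln (1 + a / t) + (x - a) / t) by (field; lra).
  apply ln_1_plus_div_le_tangent; lra.
Qed.

Lemma RiemannInt_log_kernel_ge_chord t a b B (pr : Riemann_integrable (log_kernel t) a b) :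
  0 < t -> 0 <= a <= b -> b <= B ->
  ln (1 + a / t) * (exp (- a) - exp (- b))
  + / (t + B) * (exp (- a) - exp (- b) - (b - a) * exp (- b)) <= RiemannInt pr.
Proof.
  intros Ht Hab HbB. apply RiemannInt_ge_affine_exp; [lra |].
  intros x Hx. unfold log_kernel. apply Rmult_le_compat_r; [left; apply exp_pos |].
  replace (ln (1 + a / t) + / (t + B) * (x - a))
    with (ln (1 + a / t) + (x - a) / (t + B)) by (field; lra).
  apply ln_1_plus_div_ge_chord; lra.
Qed.

(* [T2] is a Riemann sum of [ln (1 + x / t)] against [exp (- x) dx] at the points [node kk j],
   which decrease from [ln kk] to [0] and cut off mass [1 / kk] each. *)
Definition node (kk j : nat) : R := - ln (INR (S j) / INR kk).

Lemma exp_opp_node kk j : (1 <= kk)%nat -> exp (- node kk j) = INR (S j) / INR kk.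
Proof.
  intros Hk. unfold node. rewrite Ropp_involutive, exp_ln; [reflexivity |].
  apply Rdiv_lt_0_compat; apply lt_0_INR; lia.
Qed.

Lemma node_0 kk : (1 <= kk)%nat -> node kk 0 = ln (INR kk).
Proof.
  intros Hk. unfold node. rewrite ln_div by (apply lt_0_INR; lia).
  simpl INR. rewrite ln_1. ring.
Qed.

Lemma node_last kk : (1 <= kk)%nat -> node kk (pred kk) = 0.
Proof.
  intros Hk. unfold node. replace (S (pred kk)) with kk by lia.
  unfold Rdiv. rewrite Rinv_r, ln_1 by (apply not_0_INR; lia). ring.
Qed.

Lemma node_antimono kk i j : (1 <= kk)%nat -> (i <= j)%nat -> node kk j <= node kk i.
Proof.
  intros Hk Hij. unfold node. apply Ropp_le_contravar, ln_le.
  - apply Rdiv_lt_0_compat; apply lt_0_INR; lia.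
  - apply Rmult_le_compat_r; [left; apply Rinv_0_lt_compat, lt_0_INR; lia | apply le_INR; lia].
Qed.

Lemma node_nonneg kk j : (j < kk)%nat -> 0 <= node kk j.
Proof.
  intros Hj. rewrite <- (node_last kk) by lia. apply node_antimono; lia.
Qed.

Lemma node_le_ln kk j : (1 <= kk)%nat -> node kk j <= ln (INR kk).
Proof. intros Hk. rewrite <- (node_0 kk Hk). apply node_antimono; lia. Qed.

Definition log_node_sum (t : R) (kk m : nat) : R :=
  sum_f_R0 (fun j => ln (1 + node kk j / t)) m.

Lemma RiemannInt_log_kernel_node_le t kk A : 0 < t -> (1 <= kk)%nat -> ln (INR kk) <= A ->
  forall m, (m < kk)%nat -> forall pr : Riemann_integrable (log_kernel t) (node kk m) A,
  RiemannInt pr <= / INR kk * log_node_sum t kk m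
    + / t * ((1 + node kk m) * exp (- node kk m) - / INR kk * sum_f_R0 (node kk) m).
Proof.
  intros Ht Hk HA. assert (Hkp : 0 < INR kk) by (apply lt_0_INR; lia).
  induction m as [| m IH]; intros Hm pr.
  - pose proof (node_nonneg kk 0 Hm). pose proof (node_0 kk Hk) as E0.
    eapply Rle_trans; [apply RiemannInt_log_kernel_le_tangent; lra |].
    unfold log_node_sum. simpl sum_f_R0. rewrite exp_opp_node, E0 by assumption.
    assert (0 <= ln (1 + ln (INR kk) / t)).
    { rewrite <- ln_1. apply ln_le; [lra |].
      assert (0 <= ln (INR kk) / t) by (apply Rdiv_le_0_compat; lra). lra. }
    pose proof (exp_pos (- A)). assert (0 < / t) by (apply Rinv_0_lt_compat; lra).
    assert (0 <= / t * ((A - ln (INR kk)) * exp (- A))) by (apply Rmult_le_pos; nra).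
    simpl INR. unfold Rdiv. nra.
  - assert (Hab : node kk (S m) <= node kk m) by (apply node_antimono; lia).
    assert (HbA : node kk m <= A) by (pose proof (node_le_ln kk m Hk); lra).
    rewrite <- (RiemannInt_P26 (RiemannInt_P22 pr (conj Hab HbA))
                  (RiemannInt_P23 pr (conj Hab HbA)) pr).
    assert (Ha0 : 0 <= node kk (S m)) by (apply node_nonneg; lia).
    eapply Rle_trans.
    { apply Rplus_le_compat; [apply RiemannInt_log_kernel_le_tangent; lra | apply IH; lia]. }
    unfold log_node_sum. simpl sum_f_R0. rewrite !exp_opp_node by assumption.
    right. rewrite !S_INR. field. lra.
Qed.

Lemma RiemannInt_log_kernel_node_ge t kk A : 0 < t -> (1 <= kk)%nat -> ln (INR kk) <= A ->
  forall m, (m < kk)%nat -> forall pr : Riemann_integrable (log_kernel t) (node kk m) A,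
  / INR kk * log_node_sum t kk m - ln (1 + node kk 0 / t) * exp (- A)
  + / (t + ln (INR kk)) * ((1 + node kk m) * exp (- node kk m) - / INR kk
                           - / INR kk * sum_f_R0 (node kk) m)
  <= RiemannInt pr.
Proof.
  intros Ht Hk HA. assert (Hkp : 0 < INR kk) by (apply lt_0_INR; lia).
  assert (Hlk : 0 <= ln (INR kk)) by (rewrite <- (node_0 kk Hk); apply node_nonneg; lia).
  induction m as [| m IH]; intros Hm pr.
  - pose proof (node_nonneg kk 0 Hm). pose proof (node_0 kk Hk) as E0.
    eapply Rle_trans; cycle 1.
    { apply (RiemannInt_ge_affine_exp _ _ _ (ln (1 + node kk 0 / t)) 0); [lra |].
      intros x Hx. unfold log_kernel. apply Rmult_le_compat_r; [left; apply exp_pos |].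
      rewrite Rmult_0_l, Rplus_0_r. apply ln_le.
      - assert (0 <= node kk 0 / t) by (apply Rdiv_le_0_compat; lra). lra.
      - apply Rplus_le_compat_l, Rmult_le_compat_r; [left; apply Rinv_0_lt_compat |]; lra. }
    unfold log_node_sum. simpl sum_f_R0. rewrite exp_opp_node by assumption.
    right. simpl INR. field. lra.
  - assert (Hab : node kk (S m) <= node kk m) by (apply node_antimono; lia).
    assert (HbA : node kk m <= A) by (pose proof (node_le_ln kk m Hk); lra).
    rewrite <- (RiemannInt_P26 (RiemannInt_P22 pr (conj Hab HbA))
                  (RiemannInt_P23 pr (conj Hab HbA)) pr).
    assert (Ha0 : 0 <= node kk (S m)) by (apply node_nonneg; lia).
    eapply Rle_trans; cycle 1.
    { apply Rplus_le_compat;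
        [apply (RiemannInt_log_kernel_ge_chord t _ _ (ln (INR kk)));
           [lra | lra | apply node_le_ln; assumption]
        | apply IH; lia]. }
    unfold log_node_sum. simpl sum_f_R0. rewrite !exp_opp_node by assumption.
    right. rewrite !S_INR. field. lra.
Qed.

(* [node_gap kk = kk - kk ln kk + ln (kk!)], which is [ln kk / 2 + O(1)] by Stirling's formula. *)
Definition node_gap (kk : nat) : R := INR kk - sum_f_R0 (node kk) (pred kk).

Lemma improper_int0_log_kernel_le_node_sum t kk m0 :
  0 < t -> (1 <= kk)%nat -> improper_int0 (log_kernel t) m0 ->
  m0 <= / INR kk * log_node_sum t kk (pred kk) + node_gap kk / (INR kk * t).
Proof.
  intros Ht Hk Hm. apply (improper_int0_le _ _ _ Hm). intros eps Heps.
  exists (ln (INR kk)). intros A HA.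
  pose proof (RiemannInt_log_kernel_node_le t kk A Ht Hk HA (pred kk) ltac:(lia)) as H.
  rewrite node_last, Ropp_0, exp_0 in H by assumption.
  intros pr. specialize (H pr).
  replace (node_gap kk / (INR kk * t)) with (/ t * (1 - / INR kk * sum_f_R0 (node kk) (pred kk)))
    by (unfold node_gap; field; split; [lra | apply not_0_INR; lia]).
  lra.
Qed.

Lemma improper_int0_log_kernel_ge_node_sum t kk m0 :
  0 < t -> (1 <= kk)%nat -> improper_int0 (log_kernel t) m0 ->
  / INR kk * log_node_sum t kk (pred kk)
  + (node_gap kk - 1) / (INR kk * (t + ln (INR kk))) <= m0.
Proof.
  intros Ht Hk Hm. apply (improper_int0_ge _ _ _ Hm). intros eps Heps.
  set (g0 := ln (1 + node kk 0 / t)).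
  assert (Hg0 : 0 <= g0).
  { unfold g0. rewrite <- ln_1. apply ln_le; [lra |].
    assert (0 <= node kk 0 / t) by (apply Rdiv_le_0_compat; [apply node_nonneg; lia | lra]).
    lra. }
  exists (Rmax (ln (INR kk)) (g0 / eps)). intros A HA pr.
  pose proof (RiemannInt_log_kernel_node_ge t kk A Ht Hk
                (Rle_trans _ _ _ (Rmax_l _ _) HA) (pred kk) ltac:(lia)) as H.
  rewrite node_last, Ropp_0, exp_0 in H by assumption.
  specialize (H pr). fold g0 in H.
  pose proof (mul_exp_opp_le g0 eps A Hg0 Heps (Rle_trans _ _ _ (Rmax_r _ _) HA)).
  assert (0 <= ln (INR kk)) by (rewrite <- (node_0 kk Hk); apply node_nonneg; lia).
  replace ((node_gap kk - 1) / (INR kk * (t + ln (INR kk))))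
    with (/ (t + ln (INR kk)) * (1 - / INR kk - / INR kk * sum_f_R0 (node kk) (pred kk)))
    by (unfold node_gap; field; split; [lra | apply not_0_INR; lia]).
  lra.
Qed.

(** * Stirling's formula *)

Lemma stirling_step q : 1 <= q ->
  Rabs (1 - (q + / 2) * ln (1 + / q)) <= / (2 * q) - / (2 * (q + 1)).
Proof.
  intros Hq. set (y := / q).
  assert (Hy : 0 < y) by (apply Rinv_0_lt_compat; lra).
  assert (Hqy : q * y = 1) by (unfold y; field; lra).
  assert (Hy1 : y <= 1) by (unfold y; rewrite <- Rinv_1; apply Rinv_le_contravar; lra).
  pose proof (ln_1_plus_ge y ltac:(lra)). pose proof (ln_1_plus_le y ltac:(lra)).
  set (l := ln (1 + y)) in *.
  replace (/ (2 * q) - / (2 * (q + 1))) with (y * y / (2 * (1 + y))) by (unfold y; field; lra).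
  replace ((q + / 2) * l) with ((1 + y / 2) * (l / y)) by (unfold y; field; lra).
  assert (1 - y / 2 <= l / y).
  { apply (Rmult_le_reg_r y); [assumption |]. unfold Rdiv. rewrite Rmult_assoc, Rinv_l; nra. }
  assert (l / y <= 1 - y / 2 + y * y / 3).
  { apply (Rmult_le_reg_r y); [assumption |]. unfold Rdiv. rewrite Rmult_assoc, Rinv_l; nra. }
  assert (y * y / 4 <= y * y / (2 * (1 + y))).
  { apply Rmult_le_compat_l; [nra | apply Rinv_le_contravar; lra]. }
  apply Rabs_le. split; nra.
Qed.

Definition ln_fact_sum (p : nat) : R := sum_f_R0 (fun j => ln (INR (S j))) p.

(* The remainder [ln n! - (n + 1/2) ln n + n] in Stirling's formula, at [n = p + 1]. *)
Definition stirling_remainder (p : nat) : R :=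
  ln_fact_sum p - (INR (S p) + / 2) * ln (INR (S p)) + INR (S p).

Lemma stirling_remainder_bound p : Rabs (stirling_remainder p - 1) <= / 2 - / (2 * INR (S p)).
Proof.
  induction p as [| p IH].
  - unfold stirling_remainder, ln_fact_sum. simpl. rewrite ln_1.
    replace (0 - (1 + / 2) * 0 + 1 - 1) with 0 by ring.
    rewrite Rabs_R0. lra.
  - set (q := INR (S p)) in IH.
    assert (Hq : 1 <= q) by (unfold q; rewrite S_INR; pose proof (pos_INR p); lra).
    assert (Hstep : stirling_remainder (S p) - 1
                    = (stirling_remainder p - 1) + (1 - (q + / 2) * ln (1 + / q))).
    { unfold stirling_remainder, ln_fact_sum. rewrite tech5, (S_INR (S p)). fold q.
      replace (1 + / q) with ((q + 1) / q) by (field; lra).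
      rewrite ln_div by lra. field. }
    rewrite Hstep, (S_INR (S p)). fold q.
    pose proof (stirling_step q Hq).
    eapply Rle_trans; [apply Rabs_triang | lra].
Qed.

Lemma sum_node kk m : (1 <= kk)%nat ->
  sum_f_R0 (node kk) m = INR (S m) * ln (INR kk) - ln_fact_sum m.
Proof.
  intros Hk. assert (0 < INR kk) by (apply lt_0_INR; lia).
  induction m as [| m IH].
  - unfold ln_fact_sum, node. simpl. rewrite ln_div by lra. simpl. ring.
  - unfold ln_fact_sum in *. rewrite !tech5, IH. unfold node.
    rewrite ln_div by (try apply lt_0_INR; lia). rewrite (S_INR (S m)). ring.
Qed.

Lemma node_gap_bound kk : (1 <= kk)%nat -> Rabs (node_gap kk - ln (INR kk) / 2 - 1) <= / 2.
Proof.
  intros Hk. unfold node_gap. rewrite sum_node by assumption.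
  pose proof (stirling_remainder_bound (pred kk)) as H.
  unfold stirling_remainder in H. replace (S (pred kk)) with kk in * by lia.
  assert (0 < / (2 * INR kk)) by (apply Rinv_0_lt_compat; pose proof (lt_0_INR kk ltac:(lia)); lra).
  replace (INR kk - (INR kk * ln (INR kk) - ln_fact_sum (pred kk)) - ln (INR kk) / 2 - 1)
    with (ln_fact_sum (pred kk) - (INR kk + / 2) * ln (INR kk) + INR kk - 1) by field.
  lra.
Qed.

(** * The second-order condition *)

Lemma K_2_pos rho : rho <= 0 -> 0 < K rho 2.
Proof.
  intros Hr. pose proof ln_lt_2. unfold K. destruct (Req_EM_T rho 0); [lra |].
  unfold Rpower. assert (exp (rho * ln 2) < 1) by (rewrite <- exp_0; apply exp_increasing; nra).
  apply Rdiv_neg_neg; lra.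
Qed.

Lemma K_double_sub rho mu : rho <= 0 -> 1 <= mu ->
  exists q, K rho (2 * mu) - K rho mu = q * K rho 2 /\ 1 + rho * (mu - 1) <= q <= 1.
Proof.
  intros Hr Hmu. unfold K. destruct (Req_EM_T rho 0) as [-> | Hr0].
  - exists 1. rewrite ln_mult by lra. split; [ring | lra].
  - exists (Rpower mu rho). split.
    + rewrite <- Rpower_mult_distr by lra. field. assumption.
    + unfold Rpower. pose proof (ln_le_sub_1 mu ltac:(lra)).
      assert (0 <= ln mu) by (rewrite <- ln_1; apply ln_le; lra).
      split.
      * eapply Rle_trans; [| apply exp_ineq1_le]. nra.
      * rewrite <- exp_0. destruct (Req_dec (rho * ln mu) 0) as [Z | Z]; [rewrite Z; lra |].
        left. apply exp_increasing. nra.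
Qed.

Lemma ratio_near_1_of_perturbed_identity r K2 q e1 e2 e3 ep eps :
  0 < K2 -> ep <= K2 / 2 -> ep <= eps * K2 / 12 ->
  Rabs e1 < ep -> Rabs e2 < ep -> Rabs e3 < ep -> 1 - q <= eps / 4 -> q <= 1 ->
  r * (K2 + e1) = q * K2 + e3 - e2 -> Rabs (r - 1) <= eps.
Proof.
  intros HK Hep1 Hep2 H1 H2 H3 Hq1 Hq2 Hr.
  apply Rabs_def2 in H1, H2, H3.
  assert (K2 / 2 <= K2 + e1) by lra.
  apply Rabs_le. split.
  - assert ((r - 1) * (K2 + e1) >= - eps * (K2 + e1)) by nra. nra.
  - assert ((r - 1) * (K2 + e1) <= eps * (K2 + e1)) by nra. nra.
Qed.

(* Expanding [ln (ell (2 mu x) / ell x)] through [mu x] and directly, (A.2) gives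
   [b (mu x) K 2 ~ b x (K (2 mu) - K mu)], and [K (2 mu) - K mu] is close to [K 2] for [mu]
   close to 1. *)
Lemma second_order_ratio_near_1 ell b rho : rho <= 0 -> slowly_varying ell ->
  eventually_R (fun x => b x <> 0) -> second_order ell b rho ->
  forall eps, 0 < eps -> exists X delta, 0 < delta /\
    forall x mu, X <= x -> 1 <= mu <= 1 + delta -> Rabs (b (mu * x) / b x - 1) <= eps.
Proof.
  intros Hr [[X1 Hpos] _] [X2 Hb] Hso eps Heps.
  set (K2 := K rho 2). pose proof (K_2_pos rho Hr) as HK2. fold K2 in HK2.
  set (ep := Rmin (K2 / 2) (eps * K2 / 12)).
  assert (Hep : 0 < ep) by (unfold ep; apply Rmin_glb_lt; nra).
  pose proof (Rmin_l (K2 / 2) (eps * K2 / 12)). pose proof (Rmin_r (K2 / 2) (eps * K2 / 12)).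
  destruct (Hso 4 ep ltac:(lra) Hep) as [X0 HX0].
  set (delta := Rmin 1 (eps / (4 * (1 - rho)))).
  assert (Hd : 0 < delta).
  { unfold delta. apply Rmin_glb_lt; [lra | apply Rdiv_lt_0_compat; lra]. }
  pose proof (Rmin_l 1 (eps / (4 * (1 - rho)))) as Hd1.
  pose proof (Rmin_r 1 (eps / (4 * (1 - rho)))) as Hd2. fold delta in Hd1, Hd2.
  exists (Rmax X0 (Rmax X1 (Rmax X2 1))), delta. split; [assumption |].
  intros x mu Hx Hmu.
  pose proof (Rmax_l X0 (Rmax X1 (Rmax X2 1))). pose proof (Rmax_r X0 (Rmax X1 (Rmax X2 1))).
  pose proof (Rmax_l X1 (Rmax X2 1)). pose proof (Rmax_r X1 (Rmax X2 1)).
  pose proof (Rmax_l X2 1). pose proof (Rmax_r X2 1).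
  assert (Hmx : x <= mu * x) by nra.
  pose proof (Hpos x ltac:(lra)). pose proof (Hpos (mu * x) ltac:(lra)).
  pose proof (Hpos (2 * mu * x) ltac:(nra)).
  pose proof (Hb x ltac:(lra)). pose proof (Hb (mu * x) ltac:(lra)).
  pose proof (HX0 (mu * x) ltac:(lra) 2 ltac:(lra)) as E1.
  pose proof (HX0 x ltac:(lra) mu ltac:(lra)) as E2.
  pose proof (HX0 x ltac:(lra) (2 * mu) ltac:(lra)) as E3.
  rewrite <- Rmult_assoc in E1. fold K2 in E1.
  rewrite ln_div in E1, E2, E3 by lra.
  destruct (K_double_sub rho mu Hr ltac:(lra)) as [q [Hq Hq']]. fold K2 in Hq.
  set (l2 := ln (ell (2 * mu * x))) in *. set (l1 := ln (ell (mu * x))) in *.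
  set (l0 := ln (ell x)) in *.
  apply (ratio_near_1_of_perturbed_identity _ K2 q ((l2 - l1) / b (mu * x) - K2)
           ((l1 - l0) / b x - K rho mu) ((l2 - l0) / b x - K rho (2 * mu)) ep eps HK2);
    try assumption.
  - assert (- rho * (mu - 1) <= (1 - rho) * delta) by nra.
    apply (Rmult_le_compat_l (1 - rho)) in Hd2; [| lra].
    replace ((1 - rho) * (eps / (4 * (1 - rho)))) with (eps / 4) in Hd2 by (field; lra).
    lra.
  - lra.
  - rewrite <- Hq. field. split; assumption.
Qed.

Section IntermediateSequence.

Variable k : nat -> nat.
Hypothesis k_range : forall n, (2 <= n)%nat -> (1 <= k n)%nat /\ (k n < n)%nat.
Hypothesis k_cv_infty : cv_infty (fun n => INR (k n)).
Hypothesis ln_k_div_ln_n_cv_0 : Un_cv (fun n => ln (INR (k n)) / ln (INR n)) 0.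

Let r n := ln (INR (k n)) / ln (INR n).

Lemma ln_k_cv_infty : cv_infty (fun n => ln (INR (k n))).
Proof.
  intros M. destruct (k_cv_infty (exp M)) as [N HN]. exists N. intros n Hn.
  rewrite <- (ln_exp M). apply ln_increasing; [apply exp_pos | auto].
Qed.

Lemma ln_k_lt_ln_n n : (2 <= n)%nat -> 0 <= ln (INR (k n)) < ln (INR n).
Proof.
  intros Hn. destruct (k_range n Hn) as [Hk1 Hkn]. split.
  - rewrite <- ln_1. apply ln_le; [lra | apply (le_INR 1); assumption].
  - apply ln_increasing; [apply lt_0_INR; lia | apply lt_INR; assumption].
Qed.

Lemma Ln_eq_sub n : (2 <= n)%nat -> Ln k n = ln (INR n) - ln (INR (k n)).
Proof. intros Hn. destruct (k_range n Hn). unfold Ln. apply ln_div; apply lt_0_INR; lia. Qed.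

Lemma Ln_eq n : (2 <= n)%nat -> Ln k n = ln (INR n) * (1 - r n).
Proof.
  intros Hn. pose proof (ln_k_lt_ln_n n Hn). rewrite Ln_eq_sub by assumption.
  unfold r. field. lra.
Qed.

Lemma ln_n_div_Ln_cv_1 : Un_cv (fun n => ln (INR n) / Ln k n) 1.
Proof.
  apply (Un_cv_eventually_ext (fun n => / (1 - r n))).
  - apply (Un_cv_eq _ (/ (1 - 0))); [| field].
    apply Un_cv_inv; [apply (CV_minus (fun _ => 1)); [apply Un_cv_const | assumption] | lra].
  - apply (eventually_N_mono (fun n => (2 <= n)%nat)); [| apply eventually_N_ge].
    intros n Hn. pose proof (ln_k_lt_ln_n n Hn). rewrite Ln_eq by assumption.
    unfold r. field. lra.
Qed.

Lemma ln_k_div_Ln_cv_0 : Un_cv (fun n => ln (INR (k n)) / Ln k n) 0.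
Proof.
  apply (Un_cv_eventually_ext (fun n => r n * / (1 - r n))).
  - apply (Un_cv_eq _ (0 * / (1 - 0))); [| ring].
    apply CV_mult; [assumption |].
    apply Un_cv_inv; [apply (CV_minus (fun _ => 1)); [apply Un_cv_const | assumption] | lra].
  - apply (eventually_N_mono (fun n => (2 <= n)%nat)); [| apply eventually_N_ge].
    intros n Hn. pose proof (ln_k_lt_ln_n n Hn). rewrite Ln_eq by assumption.
    unfold r. field. lra.
Qed.

Lemma Ln_cv_infty : cv_infty (Ln k).
Proof.
  intros M.
  apply (eventually_N_mono (fun n => (2 <= n)%nat /\ exp (2 * Rmax 0 M + 1) < INR (k n)
                                     /\ Rabs (r n - 0) < / 2)).
  - intros n [Hn [Hk Hr]]. apply Rabs_def2 in Hr. rewrite Rminus_0_r in Hr.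
    pose proof (ln_k_lt_ln_n n Hn). pose proof (Rmax_r 0 M).
    assert (2 * Rmax 0 M + 1 < ln (INR (k n))).
    { rewrite <- (ln_exp (2 * Rmax 0 M + 1)). apply ln_increasing; [apply exp_pos | assumption]. }
    rewrite Ln_eq by assumption. nra.
  - apply eventually_N_and; [apply eventually_N_ge |].
    apply eventually_N_and; [apply k_cv_infty | apply Un_cv_eventually; [assumption | lra]].
Qed.

Lemma ln_n_cv_infty : cv_infty (fun n => ln (INR n)).
Proof.
  intros M. destruct (Ln_cv_infty M) as [N HN]. exists (max N 2). intros n Hn.
  specialize (HN n ltac:(lia)). pose proof (ln_k_lt_ln_n n ltac:(lia)).
  rewrite Ln_eq_sub in HN by lia. lra.
Qed.

Lemma eventually_Ln_ge_2 :
  eventually_N (fun n => (2 <= n)%nat /\ 2 <= Ln k n /\ 1 <= ln (INR (k n))).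
Proof.
  apply eventually_N_and; [apply eventually_N_ge |].
  apply eventually_N_and; apply cv_infty_eventually; [apply Ln_cv_infty | apply ln_k_cv_infty].
Qed.

Lemma b_ln_div_b_Ln_cv_1 ell b rho : rho <= 0 -> slowly_varying ell ->
  eventually_R (fun x => b x <> 0) -> second_order ell b rho ->
  Un_cv (fun n => b (ln (INR n)) / b (Ln k n)) 1.
Proof.
  intros Hrho Hell Hb Hso. apply eventually_Un_cv. intros eps Heps.
  destruct (second_order_ratio_near_1 ell b rho Hrho Hell Hb Hso (eps / 2) ltac:(lra))
    as [X [d [Hd HX]]].
  eapply eventually_N_mono;
    [| exact (eventually_N_and _ _ eventually_Ln_ge_2
                (eventually_N_and _ _ (cv_infty_eventually _ X Ln_cv_infty)
                   (Un_cv_eventually _ _ d ln_n_div_Ln_cv_1 Hd)))].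
  intros n [[Hn [HL _]] [HXL Hmu]]. apply Rabs_def2 in Hmu.
  pose proof (ln_k_lt_ln_n n Hn). pose proof (Ln_eq_sub n Hn).
  assert (Hmu1 : 1 <= ln (INR n) / Ln k n).
  { apply (Rmult_le_reg_r (Ln k n)); [lra |].
    unfold Rdiv. rewrite Rmult_assoc, Rinv_l by lra. lra. }
  pose proof (HX (Ln k n) (ln (INR n) / Ln k n) HXL ltac:(lra)) as Hratio.
  replace (ln (INR n) / Ln k n * Ln k n) with (ln (INR n)) in Hratio by (field; lra).
  lra.
Qed.

Section Estimators.

Variable mu0 : R -> R.
Hypothesis mu0_improper_int : forall t, 0 < t -> improper_int0 (log_kernel t) (mu0 t).

Lemma mu0_bounds t : 1 <= t ->
  1 / t - 1 / (t * t) <= mu0 t <= 1 / t - 1 / (t * t) + 2 / (t * t * t).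
Proof.
  intros Ht. pose proof (mu0_improper_int t ltac:(lra)).
  split; [apply improper_int0_log_kernel_ge | apply improper_int0_log_kernel_le]; assumption.
Qed.

Lemma a1_eventually_0 : eventually_N (fun n => a_n mu0 k n (T1 mu0 k n) = 0).
Proof.
  eapply eventually_N_mono; [| exact eventually_Ln_ge_2].
  intros n [_ [HL _]]. destruct (mu0_bounds (Ln k n) ltac:(lra)) as [Hm _].
  assert (0 < 1 / Ln k n - 1 / (Ln k n * Ln k n)).
  { replace (1 / Ln k n - 1 / (Ln k n * Ln k n)) with ((Ln k n - 1) / (Ln k n * Ln k n))
      by (field; lra).
    apply Rdiv_lt_0_compat; nra. }
  unfold a_n, T1. field. lra.
Qed.

Lemma a3_scaled_cv : Un_cv (fun n => a_n mu0 k n (T3 k n) * Ln k n) (-1).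
Proof.
  apply (Un_cv_squeeze (fun _ => -1) _ (fun n => -1 + 2 * / Ln k n)).
  - eapply eventually_N_mono; [| exact eventually_Ln_ge_2].
    intros n [_ [HL _]]. set (L := Ln k n) in *.
    destruct (mu0_bounds L ltac:(lra)) as [Hm1 Hm2].
    unfold a_n, T3. fold L.
    replace ((mu0 L / / L - 1) * L) with (mu0 L * (L * L) - L) by (field; lra).
    apply (Rmult_le_compat_r (L * L)) in Hm1, Hm2; [| nra ..].
    replace ((1 / L - 1 / (L * L)) * (L * L)) with (L - 1) in Hm1 by (field; lra).
    replace ((1 / L - 1 / (L * L) + 2 / (L * L * L)) * (L * L)) with (L - 1 + 2 * / L) in Hm2
      by (field; lra).
    lra.
  - apply Un_cv_const.
  - apply (Un_cv_eq _ (-1 + 2 * 0)); [| ring].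
    apply CV_plus; [apply Un_cv_const | apply CV_mult; [apply Un_cv_const |]].
    apply cv_infty_cv_0, Ln_cv_infty.
Qed.

Lemma T2_eq n : T2 k n = / INR (k n) * log_node_sum (Ln k n) (k n) (pred (k n)).
Proof.
  unfold T2, log_node_sum. f_equal. apply sum_eq. intros i _. unfold node. f_equal.
  unfold Rdiv. ring.
Qed.

Lemma T2_mu0_bounds n : (1 <= k n)%nat -> 0 < Ln k n ->
  T2 k n + (node_gap (k n) - 1) / (INR (k n) * (Ln k n + ln (INR (k n)))) <= mu0 (Ln k n)
  <= T2 k n + node_gap (k n) / (INR (k n) * Ln k n).
Proof.
  intros Hk HL. pose proof (mu0_improper_int (Ln k n) HL). rewrite T2_eq.
  split;
    [apply improper_int0_log_kernel_ge_node_sum | apply improper_int0_log_kernel_le_node_sum];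
    assumption.
Qed.

Lemma mu0_gap_scaled_bounds L kap l m T D : 0 < L -> 1 <= kap -> 0 < l ->
  T + (D - 1) / (kap * (L + l)) <= m -> m <= T + D / (kap * L) -> Rabs (D - l / 2 - 1) <= / 2 ->
  (/ 2 - / 2 * / l) * / (1 + l / L) <= (m - T) * L * kap / l <= / 2 + 3 / 2 * / l.
Proof.
  intros HL Hk Hl Hlo Hup HD. apply Rabs_le_between in HD. destruct HD as [HD1 HD2].
  assert (Hu1 : (m - T) * (L * kap) <= D).
  { apply (Rmult_le_compat_r (L * kap)) in Hup; [| nra].
    replace ((T + D / (kap * L)) * (L * kap)) with (T * (L * kap) + D) in Hup by (field; lra).
    nra. }
  assert (Hu2 : D - 1 <= (m - T) * ((L + l) * kap)).
  { apply (Rmult_le_compat_r ((L + l) * kap)) in Hlo; [| nra].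
    replace ((T + (D - 1) / (kap * (L + l))) * ((L + l) * kap))
      with (T * ((L + l) * kap) + (D - 1)) in Hlo by (field; lra).
    nra. }
  split.
  - replace ((m - T) * L * kap / l) with ((m - T) * ((L + l) * kap) * (L / ((L + l) * l)))
      by (field; lra).
    replace ((/ 2 - / 2 * / l) * / (1 + l / L)) with ((l / 2 - / 2) * (L / ((L + l) * l)))
      by (field; lra).
    apply Rmult_le_compat_r; [apply Rdiv_le_0_compat; nra | lra].
  - replace ((m - T) * L * kap / l) with ((m - T) * (L * kap) * / l) by (field; lra).
    replace (/ 2 + 3 / 2 * / l) with ((l / 2 + 3 / 2) * / l) by (field; lra).
    apply Rmult_le_compat_r; [left; apply Rinv_0_lt_compat |]; lra.
Qed.

Lemma T_mul_L_bounds L kap l m T D : 1 <= L -> 1 <= kap -> 1 <= l ->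
  T + (D - 1) / (kap * (L + l)) <= m -> m <= T + D / (kap * L) ->
  1 / L - 1 / (L * L) <= m -> m <= 1 / L - 1 / (L * L) + 2 / (L * L * L) ->
  Rabs (D - l / 2 - 1) <= / 2 ->
  1 - / L - / 2 * (l / kap) - 3 / 2 * / kap <= T * L <= 1 - / L + 2 * (/ L * / L).
Proof.
  intros HL Hk Hl Hlo Hup Hm1 Hm2 HD. apply Rabs_le_between in HD. destruct HD as [HD1 HD2].
  split.
  - apply (Rmult_le_compat_r L) in Hm1; [| lra].
    replace ((1 / L - 1 / (L * L)) * L) with (1 - / L) in Hm1 by (field; lra).
    assert (D / (kap * L) * L <= (l / 2 + 3 / 2) * / kap).
    { replace (D / (kap * L) * L) with (D * / kap) by (field; lra).
      apply Rmult_le_compat_r; [left; apply Rinv_0_lt_compat |]; lra. }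
    replace ((l / 2 + 3 / 2) * / kap) with (/ 2 * (l / kap) + 3 / 2 * / kap) in H
      by (field; lra).
    nra.
  - assert (0 <= (D - 1) / (kap * (L + l))) by (apply Rdiv_le_0_compat; nra).
    apply (Rmult_le_compat_r L) in Hm2; [| lra].
    replace ((1 / L - 1 / (L * L) + 2 / (L * L * L)) * L) with (1 - / L + 2 * (/ L * / L)) in Hm2
      by (field; lra).
    nra.
Qed.

Lemma mu0_sub_T2_scaled_cv :
  Un_cv (fun n => (mu0 (Ln k n) - T2 k n) * Ln k n * INR (k n) / ln (INR (k n))) (/ 2).
Proof.
  apply (Un_cv_squeeze (fun n => (/ 2 - / 2 * / ln (INR (k n))) * / (1 + ln (INR (k n)) / Ln k n))
           _ (fun n => / 2 + 3 / 2 * / ln (INR (k n)))).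
  - eapply eventually_N_mono; [| exact eventually_Ln_ge_2].
    intros n [Hn [HL Hl]]. destruct (k_range n Hn) as [Hk _].
    destruct (T2_mu0_bounds n Hk ltac:(lra)).
    apply (mu0_gap_scaled_bounds _ _ _ _ _ (node_gap (k n))); try lra.
    + apply (le_INR 1); assumption.
    + apply node_gap_bound; assumption.
  - apply (Un_cv_eq _ ((/ 2 - / 2 * 0) * / (1 + 0))); [| field].
    apply CV_mult.
    + apply CV_minus; [apply Un_cv_const |].
      apply CV_mult; [apply Un_cv_const | apply cv_infty_cv_0, ln_k_cv_infty].
    + apply Un_cv_inv; [| lra].
      apply CV_plus; [apply Un_cv_const | apply ln_k_div_Ln_cv_0].
  - apply (Un_cv_eq _ (/ 2 + 3 / 2 * 0)); [| ring].
    apply CV_plus; [apply Un_cv_const |].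
    apply CV_mult; [apply Un_cv_const | apply cv_infty_cv_0, ln_k_cv_infty].
Qed.

Lemma T2_mul_Ln_cv_1 : Un_cv (fun n => T2 k n * Ln k n) 1.
Proof.
  assert (HiL : Un_cv (fun n => / Ln k n) 0) by apply cv_infty_cv_0, Ln_cv_infty.
  assert (Hik : Un_cv (fun n => / INR (k n)) 0) by now apply cv_infty_cv_0.
  apply (Un_cv_squeeze
           (fun n => 1 - / Ln k n - / 2 * (ln (INR (k n)) / INR (k n)) - 3 / 2 * / INR (k n))
           _ (fun n => 1 - / Ln k n + 2 * (/ Ln k n * / Ln k n))).
  - eapply eventually_N_mono; [| exact eventually_Ln_ge_2].
    intros n [Hn [HL Hl]]. destruct (k_range n Hn) as [Hk _].
    destruct (T2_mu0_bounds n Hk ltac:(lra)). destruct (mu0_bounds (Ln k n) ltac:(lra)).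
    apply (T_mul_L_bounds _ _ _ (mu0 (Ln k n)) _ (node_gap (k n))); try lra.
    + apply (le_INR 1); assumption.
    + apply node_gap_bound; assumption.
  - apply (Un_cv_eq _ (1 - 0 - / 2 * 0 - 3 / 2 * 0)); [| ring].
    repeat apply CV_minus; try apply Un_cv_const; try assumption;
      apply CV_mult; try apply Un_cv_const; try assumption.
    now apply Un_cv_ln_div_cv_infty.
  - apply (Un_cv_eq _ (1 - 0 + 2 * (0 * 0))); [| ring].
    apply CV_plus; [apply CV_minus; [apply Un_cv_const | assumption] |].
    apply CV_mult; [apply Un_cv_const | apply CV_mult; assumption].
Qed.

Lemma a2_scaled_cv : Un_cv (fun n => a_n mu0 k n (T2 k n) * INR (k n) / ln (INR (k n))) (/ 2).
Proof.
  apply (Un_cv_eventually_ext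
           (fun n => (mu0 (Ln k n) - T2 k n) * Ln k n * INR (k n) / ln (INR (k n))
                     * / (T2 k n * Ln k n))).
  - apply (Un_cv_eq _ (/ 2 * / 1)); [| field].
    apply CV_mult; [apply mu0_sub_T2_scaled_cv | apply Un_cv_inv; [apply T2_mul_Ln_cv_1 | lra]].
  - eapply eventually_N_mono;
      [| exact (eventually_N_and _ _ eventually_Ln_ge_2
                  (Un_cv_eventually_gt _ _ (/ 2) T2_mul_Ln_cv_1 ltac:(lra)))].
    intros n [[_ [HL Hl]] HT].
    assert (T2 k n <> 0) by (intros Z; rewrite Z in HT; lra).
    unfold a_n. field. repeat split; lra.
Qed.

Lemma a2_eventually_pos :
  eventually_N (fun n => 0 < a_n mu0 k n (T2 k n) /\ 1 <= ln (INR (k n)) /\ 0 < INR (k n)).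
Proof.
  eapply eventually_N_mono;
    [| exact (eventually_N_and _ _ eventually_Ln_ge_2
                (Un_cv_eventually_gt _ _ 0 a2_scaled_cv ltac:(lra)))].
  intros n [[Hn [_ Hl]] HX]. destruct (k_range n Hn) as [Hk _].
  assert (0 < INR (k n)) by (apply lt_0_INR; lia).
  repeat split; [| lra | assumption].
  replace (a_n mu0 k n (T2 k n))
    with (a_n mu0 k n (T2 k n) * INR (k n) / ln (INR (k n)) * (ln (INR (k n)) / INR (k n)))
    by (field; lra).
  apply Rmult_lt_0_compat; [assumption | apply Rdiv_lt_0_compat; lra].
Qed.

Lemma a3_eventually_neg : eventually_N (fun n => a_n mu0 k n (T3 k n) < 0 /\ 0 < Ln k n).
Proof.
  eapply eventually_N_mono;
    [| exact (eventually_N_and _ _ eventually_Ln_ge_2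
                (Un_cv_eventually_lt _ _ (- / 2) a3_scaled_cv ltac:(lra)))].
  intros n [[_ [HL _]] HX]. split; [nra | lra].
Qed.

(** * Comparison of the AMSEs *)

Section Comparison.

Variables (b : R -> R) (theta : R).
Hypothesis theta_pos : 0 < theta.

Lemma AMSE_sub_AMSE1 n T : a_n mu0 k n (T1 mu0 k n) = 0 ->
  AMSE mu0 b theta k n T - AMSE1 mu0 b theta k n
  = theta * a_n mu0 k n T * (theta * a_n mu0 k n T + 2 * b (Ln k n)).
Proof. intros Ha1. unfold AMSE1, AMSE. rewrite Ha1. ring. Qed.

Lemma AMSE_lt_AMSE1 n T s d :
  a_n mu0 k n (T1 mu0 k n) = 0 -> 0 < s ->
  theta * a_n mu0 k n T + 2 * b (Ln k n) = s * d -> a_n mu0 k n T * d < 0 ->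
  AMSE mu0 b theta k n T < AMSE1 mu0 b theta k n.
Proof.
  intros Ha1 Hs Hbias Hsign. pose proof (AMSE_sub_AMSE1 n T Ha1) as E.
  rewrite Hbias in E. assert (0 < theta * s) by nra. nra.
Qed.

Lemma AMSE1_lt_AMSE n T s d :
  a_n mu0 k n (T1 mu0 k n) = 0 -> 0 < s ->
  theta * a_n mu0 k n T + 2 * b (Ln k n) = s * d -> 0 < a_n mu0 k n T * d ->
  AMSE1 mu0 b theta k n < AMSE mu0 b theta k n T.
Proof.
  intros Ha1 Hs Hbias Hsign. pose proof (AMSE_sub_AMSE1 n T Ha1) as E.
  rewrite Hbias in E. assert (0 < theta * s) by nra. nra.
Qed.

Lemma opp_theta_a3_scaled_cv : Un_cv (fun n => - theta * (a_n mu0 k n (T3 k n) * Ln k n)) theta.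
Proof.
  apply (Un_cv_eq _ (- theta * -1)); [| ring].
  apply CV_mult; [apply Un_cv_const | apply a3_scaled_cv].
Qed.

Lemma eventually_AMSE2_lt_AMSE1 :
  eventually_N (fun n => 2 * theta * (a_n mu0 k n (T2 k n) * INR (k n) / ln (INR (k n)))
                         < -4 * b (Ln k n) * INR (k n) / ln (INR (k n))) ->
  eventually_N (fun n => AMSE2 mu0 b theta k n < AMSE1 mu0 b theta k n).
Proof.
  intros Huv.
  eapply eventually_N_mono;
    [| exact (eventually_N_and _ _ Huv (eventually_N_and _ _ a2_eventually_pos a1_eventually_0))].
  intros n [H [[Ha Hl] Ha1]].
  apply (AMSE_lt_AMSE1 _ _ (ln (INR (k n)) / (2 * INR (k n)))
           (2 * theta * (a_n mu0 k n (T2 k n) * INR (k n) / ln (INR (k n)))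
            - -4 * b (Ln k n) * INR (k n) / ln (INR (k n)))); try assumption.
  - apply Rdiv_lt_0_compat; lra.
  - field. lra.
  - nra.
Qed.

Lemma eventually_AMSE1_lt_AMSE2 :
  eventually_N (fun n => -4 * b (Ln k n) * INR (k n) / ln (INR (k n))
                         < 2 * theta * (a_n mu0 k n (T2 k n) * INR (k n) / ln (INR (k n)))) ->
  eventually_N (fun n => AMSE1 mu0 b theta k n < AMSE2 mu0 b theta k n).
Proof.
  intros Hvu.
  eapply eventually_N_mono;
    [| exact (eventually_N_and _ _ Hvu (eventually_N_and _ _ a2_eventually_pos a1_eventually_0))].
  intros n [H [[Ha Hl] Ha1]].
  apply (AMSE1_lt_AMSE _ _ (ln (INR (k n)) / (2 * INR (k n)))
           (2 * theta * (a_n mu0 k n (T2 k n) * INR (k n) / ln (INR (k n)))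
            - -4 * b (Ln k n) * INR (k n) / ln (INR (k n)))); try assumption.
  - apply Rdiv_lt_0_compat; lra.
  - field. lra.
  - nra.
Qed.

Lemma eventually_AMSE3_lt_AMSE1 :
  eventually_N (fun n => - theta * (a_n mu0 k n (T3 k n) * Ln k n) < 2 * (Ln k n * b (Ln k n))) ->
  eventually_N (fun n => AMSE3 mu0 b theta k n < AMSE1 mu0 b theta k n).
Proof.
  intros Huv.
  eapply eventually_N_mono;
    [| exact (eventually_N_and _ _ Huv (eventually_N_and _ _ a3_eventually_neg a1_eventually_0))].
  intros n [H [[Ha HL] Ha1]].
  apply (AMSE_lt_AMSE1 _ _ (/ Ln k n)
           (2 * (Ln k n * b (Ln k n)) - - theta * (a_n mu0 k n (T3 k n) * Ln k n)));
    try assumption.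
  - now apply Rinv_0_lt_compat.
  - field. lra.
  - nra.
Qed.

Lemma eventually_AMSE1_lt_AMSE3 :
  eventually_N (fun n => 2 * (Ln k n * b (Ln k n)) < - theta * (a_n mu0 k n (T3 k n) * Ln k n)) ->
  eventually_N (fun n => AMSE1 mu0 b theta k n < AMSE3 mu0 b theta k n).
Proof.
  intros Hvu.
  eapply eventually_N_mono;
    [| exact (eventually_N_and _ _ Hvu (eventually_N_and _ _ a3_eventually_neg a1_eventually_0))].
  intros n [H [[Ha HL] Ha1]].
  apply (AMSE1_lt_AMSE _ _ (/ Ln k n)
           (2 * (Ln k n * b (Ln k n)) - - theta * (a_n mu0 k n (T3 k n) * Ln k n)));
    try assumption.
  - now apply Rinv_0_lt_compat.
  - field. lra.
  - nra.
Qed.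

Lemma AMSE_order_b_nonpos :
  eventually_R (fun x => b x <= 0) -> eventually_R (fun x => b x <> 0) ->
  Un_cv (fun n => b (ln (INR n)) / b (Ln k n)) 1 ->
  forall alpha : ext,
  seq_lim_ext (fun n => -4 * b (ln (INR n)) * INR (k n) / ln (INR (k n))) alpha ->
  (R_lt_ext theta alpha ->
     eventually_N (fun n => AMSE2 mu0 b theta k n < AMSE1 mu0 b theta k n /\
                            AMSE1 mu0 b theta k n < AMSE3 mu0 b theta k n)) /\
  (ext_lt_R alpha theta ->
     eventually_N (fun n => AMSE1 mu0 b theta k n <
                            Rmin (AMSE2 mu0 b theta k n) (AMSE3 mu0 b theta k n))).
Proof.
  intros Hnonpos Hnz Hratio alpha Halpha.
  assert (Hbias : seq_lim_ext (fun n => -4 * b (Ln k n) * INR (k n) / ln (INR (k n))) alpha).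
  { apply (seq_lim_ext_eventually_ext _ _ _ (seq_lim_ext_div_cv_1 _ _ _ Halpha Hratio)).
    eapply eventually_N_mono;
      [| exact (eventually_N_and _ _ (eventually_R_cv_infty _ _ Hnz ln_n_cv_infty)
                  (eventually_N_and _ _ (eventually_R_cv_infty _ _ Hnz Ln_cv_infty)
                     a2_eventually_pos))].
    intros n [Hbn [HbL [_ [Hl Hk]]]]. field. repeat split; lra. }
  assert (Hvar : Un_cv (fun n => 2 * theta * (a_n mu0 k n (T2 k n) * INR (k n) / ln (INR (k n))))
                   theta).
  { apply (Un_cv_eq _ (2 * theta * / 2)); [| field].
    apply CV_mult; [apply Un_cv_const | apply a2_scaled_cv]. }
  assert (H13 : eventually_N (fun n => AMSE1 mu0 b theta k n < AMSE3 mu0 b theta k n)).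
  { apply eventually_AMSE1_lt_AMSE3.
    eapply eventually_N_mono;
      [| exact (eventually_N_and _ _ (eventually_R_cv_infty _ _ Hnonpos Ln_cv_infty)
                  (eventually_N_and _ _ a3_eventually_neg
                     (Un_cv_eventually_gt _ _ 0 opp_theta_a3_scaled_cv ltac:(lra))))].
    intros n [Hb [[_ HL] H]]. nra. }
  split.
  - intros Hgt.
    apply eventually_N_and; [| exact H13].
    exact (eventually_AMSE2_lt_AMSE1 (Un_cv_lt_seq_lim_ext _ _ _ _ Hvar Hbias Hgt)).
  - intros Hlt.
    apply (eventually_N_mono (fun n => AMSE1 mu0 b theta k n < AMSE2 mu0 b theta k n /\
                                       AMSE1 mu0 b theta k n < AMSE3 mu0 b theta k n));
      [intros n [H12 H13']; now apply Rmin_glb_lt | apply eventually_N_and; [| exact H13]].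
    exact (eventually_AMSE1_lt_AMSE2 (seq_lim_ext_lt_Un_cv _ _ _ _ Hvar Hbias Hlt)).
Qed.

Lemma AMSE_order_b_nonneg :
  eventually_R (fun x => 0 <= b x) ->
  forall beta : ext, fun_lim_ext (fun x => 2 * (x * b x)) beta ->
  (R_lt_ext theta beta ->
     eventually_N (fun n => AMSE3 mu0 b theta k n < AMSE1 mu0 b theta k n /\
                            AMSE1 mu0 b theta k n < AMSE2 mu0 b theta k n)) /\
  (ext_lt_R beta theta ->
     eventually_N (fun n => AMSE1 mu0 b theta k n <
                            Rmin (AMSE2 mu0 b theta k n) (AMSE3 mu0 b theta k n))).
Proof.
  intros Hnonneg beta Hbeta.
  pose proof (fun_lim_ext_cv_infty _ _ _ Hbeta Ln_cv_infty) as Hbias.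
  assert (H12 : eventually_N (fun n => AMSE1 mu0 b theta k n < AMSE2 mu0 b theta k n)).
  { apply eventually_AMSE1_lt_AMSE2.
    eapply eventually_N_mono;
      [| exact (eventually_N_and _ _ (eventually_R_cv_infty _ _ Hnonneg Ln_cv_infty)
                  (eventually_N_and _ _ a2_eventually_pos
                     (Un_cv_eventually_gt _ _ 0 a2_scaled_cv ltac:(lra))))].
    intros n [Hb [[_ [Hl Hk]] H]].
    assert (0 <= b (Ln k n) * INR (k n) / ln (INR (k n))) by (apply Rdiv_le_0_compat; nra).
    nra. }
  split.
  - intros Hgt.
    apply eventually_N_and; [| exact H12].
    exact (eventually_AMSE3_lt_AMSE1
             (Un_cv_lt_seq_lim_ext _ _ _ _ opp_theta_a3_scaled_cv Hbias Hgt)).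
  - intros Hlt.
    apply (eventually_N_mono (fun n => AMSE1 mu0 b theta k n < AMSE2 mu0 b theta k n /\
                                       AMSE1 mu0 b theta k n < AMSE3 mu0 b theta k n));
      [intros n [H12' H13]; now apply Rmin_glb_lt | apply eventually_N_and; [exact H12 |]].
    exact (eventually_AMSE1_lt_AMSE3
             (seq_lim_ext_lt_Un_cv _ _ _ _ opp_theta_a3_scaled_cv Hbias Hlt)).
Qed.

End Comparison.

End Estimators.

End IntermediateSequence.

Theorem theorem3
  (F H ell b mu0 : R -> R) (theta rho x0 : R) (k : nat -> nat) :
  is_cdf F ->
  0 < theta ->
  0 <= x0 ->
  (forall x, x0 <= x -> 1 - F x = exp (- H x)) ->
  eventually_R (fun t => is_glb (fun x => x0 <= x /\ t <= H x) (Rpower t theta * ell t)) ->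
  slowly_varying ell ->
  rho <= 0 ->
  lim_infty b 0 ->
  eventually_R (fun x => b x <> 0) ->
  second_order ell b rho ->
  (forall t, 0 < t -> improper_int0 (fun x => ln (1 + x / t) * exp (- x)) (mu0 t)) ->
  (forall n, (2 <= n)%nat -> (1 <= k n)%nat /\ (k n < n)%nat) ->
  (forall M : R, eventually_N (fun n => M <= INR (k n))) ->
  Un_cv (fun n => ln (INR (k n)) / ln (INR n)) 0 ->
  (exists lam : R, Un_cv (fun n => sqrt (INR (k n)) * b (Ln k n)) lam) ->
  (eventually_R (fun x => b x <= 0) ->
   forall alpha : ext,
   seq_lim_ext (fun n => -4 * b (ln (INR n)) * INR (k n) / ln (INR (k n))) alpha ->
   (R_lt_ext theta alpha ->
      eventually_N (fun n => AMSE2 mu0 b theta k n < AMSE1 mu0 b theta k n /\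
                             AMSE1 mu0 b theta k n < AMSE3 mu0 b theta k n)) /\
   (ext_lt_R alpha theta ->
      eventually_N (fun n => AMSE1 mu0 b theta k n <
                             Rmin (AMSE2 mu0 b theta k n) (AMSE3 mu0 b theta k n))))
  /\
  (eventually_R (fun x => 0 <= b x) ->
   forall beta : ext,
   fun_lim_ext (fun x => 2 * (x * b x)) beta ->
   (R_lt_ext theta beta ->
      eventually_N (fun n => AMSE3 mu0 b theta k n < AMSE1 mu0 b theta k n /\
                             AMSE1 mu0 b theta k n < AMSE2 mu0 b theta k n)) /\
   (ext_lt_R beta theta ->
      eventually_N (fun n => AMSE1 mu0 b theta k n <
                             Rmin (AMSE2 mu0 b theta k n) (AMSE3 mu0 b theta k n)))).
Proof.
  intros _ Htheta _ _ _ Hell Hrho _ Hb Hso Hmu Hk Hk_le Hratio _.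
  pose proof (cv_infty_of_le _ Hk_le) as Hk_infty.
  split.
  - intros Hnonpos.
    apply (AMSE_order_b_nonpos k Hk Hk_infty Hratio mu0 Hmu b theta Htheta Hnonpos Hb).
    exact (b_ln_div_b_Ln_cv_1 k Hk Hk_infty Hratio ell b rho Hrho Hell Hb Hso).
  - intros Hnonneg.
    exact (AMSE_order_b_nonneg k Hk Hk_infty Hratio mu0 Hmu b theta Htheta Hnonneg).
Qed.
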